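(* Let $n\ge 2$, let $p \in B_n$, and let $C = C_{B_{n+1}}\big(d(p)\, \sigma_1\, \delta_{n+1}^{-1}\big)$ be the centralizer of $d(p)\sigma_1\delta_{n+1}^{-1}$ in $B_{n+1}$. Define $$c_1 = \Delta_{n+1}^2,\qquad c_2 = d(p)\, \sigma_2^{-1} \cdots \sigma_n^{-1},\qquad c_3 = \sigma_1 \sigma_2\cdots \sigma_{n-1}\sigma_n^2 \sigma_{n-1}\cdots \sigma_{1}.$$ Then $c_1,c_2,c_3 \in C$, and the subgroup $C' = \langle c_1,c_2,c_3\rangle$ of $B_{n+1}$ is abelian and hence has polynomial growth.
   Context: $B_m$ denotes the braid group on $m$ strands with Artin generators $\sigma_1,\dots,\sigma_{m-1}$ and relations $\sigma_i\sigma_j\sigma_i=\sigma_j\sigma_i\sigma_j$ for $|i-j|=1$, $\sigma_i\sigma_j=\sigma_j\sigma_i$ for $|i-j|>1$; $B_\infty$ is the braid group on generators $\sigma_1,\sigma_2,\dots$ with the same relations, and $B_m\subset B_{m+1}\subset B_\infty$ via the generators. The shift $d$ is the monomorphism of $B_\infty$ induced by $\sigma_{i_1}^{\varepsilon_1}\cdots\sigma_{i_k}^{\varepsilon_k}\mapsto \sigma_{i_1+1}^{\varepsilon_1}\cdots\sigma_{i_k+1}^{\varepsilon_k}$. In $B_{n+1}$: $\delta_{n+1} = \sigma_{n}\sigma_{n-1}\cdots\sigma_1$ and $\Delta_{n+1} = (\sigma_{n}\cdots\sigma_1)(\sigma_{n}\cdots\sigma_2)\cdots(\sigma_{n})$.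 *)

From mathcomp Require Import all_boot.
Set Implicit Arguments. Unset Strict Implicit. Unset Printing Implicit Defensive.

(* A letter (i, true) stands for sigma_i, (i, false) for sigma_i^{-1}. *)
Definition letter := (nat * bool)%type.
Definition bword := seq letter.

Definition linv (x : letter) : letter := (x.1, ~~ x.2).
Definition winv (w : bword) : bword := rev (map linv w).

Definition valid (m : nat) (w : bword) : bool := all (fun x => (0 < x.1) && (x.1 < m)) w.

(* Equality in B_m : the congruence on words generated by free cancellation
   and the Artin braid relations among sigma_1 .. sigma_{m-1}. *)
Inductive beq (m : nat) : bword -> bword -> Prop :=
| beq_refl w : beq m w w
| beq_sym u v : beq m u v -> beq m v u
| beq_trans u v w : beq m u v -> beq m v w -> beq m u w
| beq_cat u u' v v' : beq m u u' -> beq m v v' -> beq m (u ++ v) (u' ++ v')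
| beq_free (x : letter) : 0 < x.1 -> x.1 < m -> beq m [:: x; linv x] [::]
| beq_braid (i : nat) : 0 < i -> i.+1 < m ->
    beq m [:: (i, true); (i.+1, true); (i, true)] [:: (i.+1, true); (i, true); (i.+1, true)]
| beq_comm (i j : nat) : 0 < i -> i.+1 < j -> j < m ->
    beq m [:: (i, true); (j, true)] [:: (j, true); (i, true)].

(* shift d : sigma_i^e |-> sigma_{i+1}^e *)
Definition shift (w : bword) : bword := map (fun x => (x.1.+1, x.2)) w.

(* delta_{n+1} = sigma_n sigma_{n-1} ... sigma_1 *)
Definition delta (n : nat) : bword := [seq (i, true) | i <- rev (iota 1 n)].

(* Delta_{n+1} = (sigma_n ... sigma_1)(sigma_n ... sigma_2) ... (sigma_n) *)
Definition Delta (n : nat) : bword :=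
  flatten [seq [seq (i, true) | i <- rev (iota k (n - k).+1)] | k <- iota 1 n].

(* the element d(p) sigma_1 delta_{n+1}^{-1} *)
Definition xelt (n : nat) (p : bword) : bword := shift p ++ [:: (1, true)] ++ winv (delta n).

Definition c1 (n : nat) : bword := Delta n ++ Delta n.
Definition c2 (n : nat) (p : bword) : bword := shift p ++ [seq (i, false) | i <- iota 2 (n - 1)].
(* sigma_1 ... sigma_{n-1} sigma_n^2 sigma_{n-1} ... sigma_1 *)
Definition c3 (n : nat) : bword :=
  [seq (i, true) | i <- iota 1 n] ++ [seq (i, true) | i <- rev (iota 1 n)].

Definition in_centralizer (m : nat) (x c : bword) : Prop :=
  valid m c /\ beq m (c ++ x) (x ++ c).

(* Words in a finite list of generators gens (and their inverses):
   (k, true) = gens_k, (k, false) = gens_k^{-1}; evaluated as braid words. *)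
Definition gen_word (gens : seq bword) (u : seq letter) : bool :=
  all (fun y => y.1 < size gens) u.
Definition geval (gens : seq bword) (u : seq letter) : bword :=
  flatten [seq (if y.2 then nth [::] gens y.1 else winv (nth [::] gens y.1)) | y <- u].

Definition subgroup_abelian (m : nat) (gens : seq bword) : Prop :=
  forall u v, gen_word gens u -> gen_word gens v ->
    beq m (geval gens u ++ geval gens v) (geval gens v ++ geval gens u).

Definition poly_growth (m : nat) (gens : seq bword) : Prop :=
  exists K d : nat, forall r : nat, exists L : seq bword,
    size L <= K * (r.+1) ^ d /\
    forall u, gen_word gens u -> size u <= r ->
      exists2 w, w \in L & beq m (geval gens u) w.

From Stdlib Require Import Setoid.
From mathcomp Require Import all_boot zify.
Set Implicit Arguments. Unset Strict Implicit. Unset Printing Implicit Defensive.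

(* Since delta^-1 = sigma_1^-1 ... sigma_n^-1, the element d(p) sigma_1 delta^-1 is c_2
   itself. Conjugation by the half twist Delta sends sigma_i to sigma_(n+1-i), so c_1 =
   Delta^2 is central; c_3 commutes with sigma_2, ..., sigma_n and hence with c_2, which is
   a word in these generators. In the abelian group they generate, a word of length r can be reordered so
   that equal letters are adjacent; it is then determined by six letter counts in [0, r],
   so the ball of radius r has at most (r+1)^6 elements. *)

Add Parametric Relation m : bword (beq m)
  reflexivity proved by (@beq_refl m) symmetry proved by (@beq_sym m)
  transitivity proved by (@beq_trans m) as beq_rel.

Add Parametric Morphism m : (@cat letter)
  with signature beq m ==> beq m ==> beq m as cat_beq.
Proof. by move=> u u' uu v v' vv; apply: beq_cat. Qed.

Add Parametric Morphism m x : (cons x) with signature beq m ==> beq m as cons_beq.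
Proof. by move=> u v; apply: beq_cat (beq_refl m [:: x]). Qed.

#[local] Hint Resolve beq_refl : core.

Definition bcommute m (a b : bword) := beq m (a ++ b) (b ++ a).

Local Notation sigma i := ((i, true) : letter).

Section Words.

Variable m : nat.

Lemma bcommute_sym a b : bcommute m a b -> bcommute m b a.
Proof. exact: beq_sym. Qed.

Lemma bcommute_refl a : bcommute m a a.
Proof. exact: beq_refl. Qed.

Lemma bcommute0 a : bcommute m a [::].
Proof. by rewrite /bcommute cats0. Qed.

Lemma bcommuteMr a b c : bcommute m a b -> bcommute m a c -> bcommute m a (b ++ c).
Proof. by rewrite /bcommute => ab ac; rewrite catA ab -catA ac catA. Qed.

Lemma bcommute_beqr a b b' : beq m b b' -> bcommute m a b' -> bcommute m a b.
Proof. by rewrite /bcommute => ->. Qed.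

Lemma linvK : involutive linv.
Proof. by case=> i []. Qed.

Lemma winvK : involutive winv.
Proof. by move=> w; rewrite /winv map_rev revK -map_comp (eq_map linvK) map_id. Qed.

Lemma winv_cons x w : winv (x :: w) = winv w ++ [:: linv x].
Proof. by rewrite /winv /= rev_cons cats1. Qed.

Lemma valid_winv w : valid m (winv w) = valid m w.
Proof. by rewrite /valid /winv all_rev all_map. Qed.

Lemma cat_winv w : valid m w -> beq m (w ++ winv w) [::].
Proof.
elim: w => [|x w IHw] /=; first by [].
case/andP=> /andP[x_gt0 x_lt] vw.
rewrite winv_cons -cat1s !catA -(catA [:: x]) IHw //.
exact: beq_free.
Qed.

Lemma winv_cat w : valid m w -> beq m (winv w ++ w) [::].
Proof. by move=> vw; rewrite -{2}(winvK w); apply: cat_winv; rewrite valid_winv. Qed.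

Lemma bcommuteVr a b : valid m b -> bcommute m a b -> bcommute m a (winv b).
Proof.
rewrite /bcommute => vb ab.
transitivity (winv b ++ (b ++ a) ++ winv b); first by rewrite !catA winv_cat.
by rewrite -ab -!catA cat_winv // cats0.
Qed.

Lemma bcommute_word a (P : pred nat) w :
  (forall i, 0 < i -> i < m -> P i -> bcommute m a [:: sigma i]) ->
  all (fun y : letter => [&& 0 < y.1, y.1 < m & P y.1]) w -> bcommute m a w.
Proof.
move=> aP; elim: w => [|[i b] w IHw] /=; first by move=> _; apply: bcommute0.
case/andP=> /and3P[i_gt0 i_lt Pi] Pw.
rewrite -cat1s; apply: bcommuteMr; last exact: IHw.
case: b; first exact: aP.
have -> : [:: (i, false)] = winv [:: sigma i] by [].
by apply: bcommuteVr; [rewrite /valid /= i_gt0 i_lt | exact: aP].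
Qed.

Lemma bcommute_far i j : 0 < i -> 0 < j -> i < m -> j < m ->
  (i.+1 < j) || (j.+1 < i) -> bcommute m [:: sigma i] [:: sigma j].
Proof.
move=> i_gt0 j_gt0 i_lt j_lt /orP[far | far]; first exact: beq_comm.
exact/bcommute_sym/beq_comm.
Qed.

Definition desc lo len : bword := [seq sigma j | j <- rev (iota lo len)].
Definition asc lo len : bword := [seq sigma j | j <- iota lo len].

Lemma descS lo len : desc lo len.+1 = sigma (lo + len) :: desc lo len.
Proof. by rewrite /desc -addn1 iotaD rev_cat. Qed.

Lemma descSl lo len : desc lo len.+1 = desc lo.+1 len ++ [:: sigma lo].
Proof. by rewrite /desc /= rev_cons map_rcons cats1. Qed.

Lemma bcommute_desc i lo len : 0 < i -> i < m -> 0 < lo -> lo + len <= m ->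
  (i.+1 < lo) || (lo + len < i) -> bcommute m [:: sigma i] (desc lo len).
Proof.
move=> *; apply: (bcommute_word (P := fun j => (i.+1 < j) || (j.+1 < i))).
  by move=> j *; apply: bcommute_far.
by rewrite all_map all_rev; apply/allP => j; rewrite mem_iota /= => ?; lia.
Qed.

Lemma sigma_desc len lo j : 0 < lo -> lo <= j -> j.+1 < lo + len -> lo + len <= m ->
  beq m (sigma j :: desc lo len) (desc lo len ++ [:: sigma j.+1]).
Proof.
elim: len => [|len IHlen] lo_gt0 lo_j j_lt len_le; first lia.
rewrite descS; have [j_lt'|j_ge] := ltnP j.+1 (lo + len).
  have far : bcommute m [:: sigma j] [:: sigma (lo + len)] by apply: bcommute_far; lia.
  rewrite -[_ :: _ :: _]/(([:: sigma j] ++ [:: sigma (lo + len)]) ++ desc lo len) far /=.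
  rewrite IHlen //; lia.
have -> : len = (j - lo).+1 by lia.
rewrite descS (_ : lo + (j - lo).+1 = j.+1); last lia.
rewrite (_ : lo + (j - lo) = j); last lia.
have braid : beq m [:: sigma j; sigma j.+1; sigma j] [:: sigma j.+1; sigma j; sigma j.+1].
  by apply: beq_braid; lia.
have far : bcommute m [:: sigma j.+1] (desc lo (j - lo)) by apply: bcommute_desc; lia.
rewrite -[_ :: _ :: _]/([:: sigma j; sigma j.+1; sigma j] ++ desc lo (j - lo)) braid.
by rewrite -[_ ++ desc lo _]/([:: sigma j.+1; sigma j] ++ ([:: sigma j.+1] ++ desc lo (j - lo))) far.
Qed.

Lemma beq_rev u v : beq m u v -> beq m (rev u) (rev v).
Proof.
elim=> {u v} [w | u v _ IH | u v w _ IHuv _ IHvw | u u' v v' _ IHu _ IHv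
  | x x_gt0 x_lt | i i_gt0 i_lt | i j i_gt0 ij j_lt].
- by [].
- exact: beq_sym.
- exact: beq_trans IHvw.
- by rewrite !rev_cat; apply: beq_cat.
- by have := beq_free x_gt0 x_lt (x := linv x); rewrite linvK.
- exact: beq_braid.
- exact/beq_sym/beq_comm.
Qed.

Lemma sigma_asc len lo j : 0 < lo -> lo <= j -> j.+1 < lo + len -> lo + len <= m ->
  beq m (asc lo len ++ [:: sigma j]) (sigma j.+1 :: asc lo len).
Proof.
move=> lo_gt0 lo_j j_lt len_le.
have := beq_rev (sigma_desc lo_gt0 lo_j j_lt len_le).
by rewrite rev_cons rev_cat -cats1 /desc map_rev revK.
Qed.

Lemma sigma_desc2 len lo : 0 < lo -> lo + len < m ->
  beq m (sigma (lo + len) :: desc lo len.+1 ++ desc lo.+1 len)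
        (desc lo len.+1 ++ desc lo.+1 len ++ [:: sigma lo]).
Proof.
elim: len lo => [|len IHlen] lo lo_gt0 len_lt; first by rewrite addn0.
have := IHlen lo.+1 (ltn0Sn _) (ltac:(lia)); rewrite addSnnS.
set F := desc lo.+1 len.+1; set E := desc lo.+2 len => IH.
have F_E : F = E ++ [:: sigma lo.+1] by rewrite /F /E descSl.
have lo_E : bcommute m [:: sigma lo] E by apply: bcommute_desc; lia.
have braid : beq m [:: sigma lo; sigma lo.+1; sigma lo] [:: sigma lo.+1; sigma lo; sigma lo.+1].
  by apply: beq_braid; lia.
rewrite (descSl lo len.+1) -/F; symmetry.
transitivity (F ++ E ++ [:: sigma lo; sigma lo.+1; sigma lo]).
  by rewrite -!catA {2}F_E -!catA (catA [:: sigma lo] E) lo_E -!catA.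
transitivity ((F ++ E ++ [:: sigma lo.+1]) ++ [:: sigma lo; sigma lo.+1]).
  by rewrite braid -!catA.
rewrite -IH F_E -!cat_cons -!catA -[[:: sigma lo; _]]/([:: sigma lo] ++ [:: sigma lo.+1]).
by rewrite (catA [:: sigma lo] E) lo_E -!catA.
Qed.

End Words.

Section HalfTwist.

Variable n : nat.

Definition Dblock k := desc k (n - k).+1.
Definition Dblocks a c := flatten [seq Dblock k | k <- iota a c].

Lemma Delta_blocks : Delta n = Dblocks 1 n.
Proof. by []. Qed.

Lemma Dblocks_sigma c a j : 0 < a -> a <= j -> j + c <= n ->
  beq n.+1 (Dblocks a c ++ [:: sigma (j + c)]) (sigma j :: Dblocks a c).
Proof.
elim: c a j => [|c IHc] a j a_gt0 a_j jc_le; first by rewrite addn0.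
rewrite /Dblocks /= -/(Dblocks _ _) -catA -addSnnS IHc; try lia.
rewrite -cat_cons /Dblock sigma_desc -?catA //; lia.
Qed.

Lemma valid_Dblocks c a : 0 < a -> (0 < c -> a + c <= n.+1) ->
  all (fun y : letter => [&& 0 < y.1, y.1 < n.+1 & a <= y.1]) (Dblocks a c).
Proof.
elim: c a => [|c IHc] a a_gt0 ac_le //=.
rewrite all_cat; apply/andP; split.
  by rewrite /Dblock /desc all_map all_rev; apply/allP => j; rewrite mem_iota /= => ?; lia.
apply: sub_all (IHc a.+1 (ltn0Sn _) (ltac:(lia))) => y /and3P[? ? ?].
by apply/and3P; split; lia.
Qed.

Lemma Dblocks_split i : 1 <= i <= n ->
  Dblocks 1 n = Dblocks 1 i.-1 ++ Dblock i ++ desc i.+1 (n - i) ++ Dblocks i.+2 (n - i).-1.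
Proof.
move=> i_bd; rewrite /Dblocks.
have -> : iota 1 n = iota 1 i.-1 ++ i :: iota i.+1 (n - i).
  have def_n : i.-1 + (n - i).+1 = n by lia.
  by rewrite -{1}def_n iotaD (_ : 1 + i.-1 = i) //; lia.
rewrite map_cat flatten_cat /=; case def_l : (n - i) => [|l] /=; first by rewrite /desc.
by rewrite /Dblock (_ : n - i.+1 = l) //; lia.
Qed.

(* Delta = D_1 ... D_n with D_k = sigma_n ... sigma_k: sigma_i commutes past D_(i+2) ... D_n,
   becomes sigma_n across D_i D_(i+1), then drops by one across each of D_1, ..., D_(i-1). *)
Lemma Delta_sigma i : 1 <= i <= n ->
  beq n.+1 (Delta n ++ [:: sigma i]) (sigma (n.+1 - i) :: Delta n).
Proof.
move=> i_bd; rewrite Delta_blocks (Dblocks_split i_bd).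
set A := Dblocks 1 i.-1; set E := desc i.+1 (n - i); set R := Dblocks i.+2 (n - i).-1.
have i_R : bcommute n.+1 [:: sigma i] R.
  apply: (bcommute_word (P := fun j => i.+1 < j)).
    by move=> j *; apply: bcommute_far; lia.
  apply: sub_all (@valid_Dblocks (n - i).-1 i.+2 (ltn0Sn _) (ltac:(lia))) => y /and3P[? ? ?].
  by apply/and3P; split.
have twist : beq n.+1 (sigma n :: Dblock i ++ E) (Dblock i ++ E ++ [:: sigma i]).
  have := @sigma_desc2 n.+1 (n - i) i; rewrite (_ : i + (n - i) = n); last lia.
  by apply; lia.
have pass : beq n.+1 (A ++ [:: sigma n]) (sigma (n.+1 - i) :: A).
  have := @Dblocks_sigma i.-1 1 (n.+1 - i); rewrite (_ : n.+1 - i + i.-1 = n); last lia.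
  by apply; lia.
transitivity (A ++ (Dblock i ++ E ++ [:: sigma i]) ++ R).
  by rewrite -!catA -i_R.
by rewrite -twist -cat1s !catA pass -!catA.
Qed.

Lemma c1_sigma i : 1 <= i <= n -> bcommute n.+1 (c1 n) [:: sigma i].
Proof.
move=> i_bd; rewrite /bcommute /c1 -catA Delta_sigma // -cat1s catA Delta_sigma; last lia.
by rewrite (_ : n.+1 - (n.+1 - i) = i) //; lia.
Qed.

Lemma valid_c1 : valid n.+1 (c1 n).
Proof.
rewrite /valid /c1 all_cat andbb Delta_blocks.
by apply: sub_all (@valid_Dblocks n 1 (ltn0Sn 0) (ltac:(lia))) => y /and3P[-> ->].
Qed.

End HalfTwist.

Lemma c1_central n w : valid n.+1 w -> bcommute n.+1 (c1 n) w.
Proof.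
move=> vw; apply: (bcommute_word (P := predT)); first by move=> i *; apply: c1_sigma; lia.
by apply: sub_all vw => y /andP[-> ->].
Qed.

Lemma c3_sigma n j : 1 <= j < n -> bcommute n.+1 (c3 n) [:: sigma j.+1].
Proof.
move=> j_bd; rewrite /bcommute (_ : c3 n = asc 1 n ++ desc 1 n) //.
transitivity (asc 1 n ++ (sigma j :: desc 1 n)); first by rewrite sigma_desc ?catA //; lia.
by rewrite -cat1s catA sigma_asc //; lia.
Qed.

Lemma valid_shift n p : valid n p -> valid n.+1 (shift p).
Proof. by rewrite /valid /shift all_map; apply: sub_all => y /= /andP[? ?]; lia. Qed.

Lemma valid_c2 n p : valid n p -> valid n.+1 (c2 n p).
Proof.
move/valid_shift; rewrite /valid /c2 all_cat => -> /=; rewrite all_map.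
by apply/allP => i; rewrite mem_iota /= => ?; lia.
Qed.

Lemma valid_c3 n : valid n.+1 (c3 n).
Proof.
rewrite /valid (_ : c3 n = asc 1 n ++ desc 1 n) // /asc /desc all_cat !all_map all_rev andbb.
by apply/allP => i; rewrite mem_iota /= => ?; lia.
Qed.

Lemma c3_c2 n p : valid n p -> bcommute n.+1 (c3 n) (c2 n p).
Proof.
move=> vp; apply: (bcommute_word (P := fun j => 1 < j)).
  by move=> i i_gt0 *; rewrite -(prednK i_gt0); apply: c3_sigma; lia.
rewrite /c2 all_cat /shift !all_map; apply/andP; split.
  by apply: sub_all vp => y /= /andP[? ?]; apply/andP; split; lia.
by apply/allP => i; rewrite mem_iota /= => ?; apply/and3P; split; lia.
Qed.

Lemma xelt_c2 n p : 1 <= n -> beq n.+1 (xelt n p) (c2 n p).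
Proof.
case: n => [//|n] _; rewrite /xelt /c2 /winv /delta !map_rev revK -map_comp /= subn1.
have free : beq n.+2 [:: sigma 1; (1, false)] [::] by apply: (@beq_free _ (1, true)).
by rewrite -[_ :: _ :: _]/([:: sigma 1; (1, false)] ++ _) free.
Qed.

Lemma filter_pred1_nseq (T : eqType) (x : T) s : filter (pred1 x) s = nseq (count_mem x s) x.
Proof. by elim: s => //= y s ->; case: eqP => [->|]. Qed.

Lemma perm_count_nseq (T : eqType) (xs s : seq T) : uniq xs -> {subset s <= xs} ->
  perm_eq s (flatten [seq nseq (count_mem x s) x | x <- xs]).
Proof.
elim: xs s => [|x xs IHxs] s /=.
  by case: s => // y s _ /(_ y); rewrite inE eqxx => /(_ isT).
case/andP=> x_xs uniq_xs s_xs; rewrite -(perm_filterC (pred1 x)) filter_pred1_nseq perm_cat2l.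
have -> : [seq nseq (count_mem y s) y | y <- xs] =
          [seq nseq (count_mem y (filter (predC (pred1 x)) s)) y | y <- xs].
  apply/eq_in_map => y y_xs; rewrite count_filter; congr nseq; apply: eq_count => z /=.
  by case: eqP => // ->; apply/esym; apply: contraNneq x_xs => <-.
apply: IHxs => // y; rewrite mem_filter => /andP[/= y_x /s_xs].
by rewrite inE (negbTE y_x).
Qed.

Fixpoint bounded_seqs r k : seq (seq nat) :=
  if k is k'.+1 then [seq i :: t | i <- iota 0 r.+1, t <- bounded_seqs r k'] else [:: [::]].

Lemma size_bounded_seqs r k : size (bounded_seqs r k) = r.+1 ^ k.
Proof. by elim: k => // k IHk; rewrite [LHS]size_allpairs size_iota IHk expnS. Qed.

Lemma mem_bounded_seqs r cs : all (fun c => c <= r) cs -> cs \in bounded_seqs r (size cs).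
Proof.
elim: cs => [|c cs IHcs] // /andP[c_le cs_le].
by apply: (allpairs_f (fun i t => i :: t)); [rewrite mem_iota | exact: IHcs].
Qed.

Section GeneratedSubgroup.

Variables (m : nat) (gens : seq bword).

Lemma geval_cat u v : geval gens (u ++ v) = geval gens u ++ geval gens v.
Proof. by rewrite /geval map_cat flatten_cat. Qed.

Lemma bcommute_geval a : all (valid m) gens -> {in gens, forall g, bcommute m a g} ->
  forall v, gen_word gens v -> bcommute m a (geval gens v).
Proof.
move=> valid_gens a_gens; elim=> [|y v IHv] /=; first by move=> _; apply: bcommute0.
case/andP=> y_lt gv; rewrite -cat1s geval_cat; apply: bcommuteMr; last exact: IHv.
have y_in := mem_nth [::] y_lt; rewrite /geval /= cats0.
by case: y.2; [|apply: bcommuteVr; [exact: (allP valid_gens)|]]; apply: a_gens.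
Qed.

Lemma subgroup_abelian_gens : all (valid m) gens ->
  {in gens &, forall g h, bcommute m g h} -> subgroup_abelian m gens.
Proof.
move=> valid_gens comm_gens u v gu gv; apply: bcommute_geval => // h h_in.
by apply/bcommute_sym/bcommute_geval => // g g_in; apply: comm_gens.
Qed.

Hypothesis gens_abelian : subgroup_abelian m gens.

Lemma geval_perm u v : gen_word gens u -> perm_eq u v -> beq m (geval gens u) (geval gens v).
Proof.
elim: u v => [|y u IHu] v gu; first by move/perm_size/esym/size0nil->.
move=> yu_v; have y_v : y \in v by rewrite -(perm_mem yu_v) mem_head.
case/splitPr: y_v yu_v => v1 v2 yu_v.
have: gen_word gens (v1 ++ y :: v2) by rewrite /gen_word -(perm_all _ yu_v).
rewrite /gen_word all_cat /= => /and3P[gv1 gy gv2].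
move: yu_v gu; rewrite perm_sym -[y :: v2]cat1s perm_catCA /= perm_cons perm_sym => u_v /andP[_ gu].
rewrite -cat1s -[y :: v2]cat1s !geval_cat (IHu _ gu u_v) geval_cat catA.
by rewrite (gens_abelian (u := [:: y]) (v := v1)) /gen_word /= ?gy // -catA.
Qed.

Definition gen_letters : seq letter := [seq (i, b) | i <- iota 0 (size gens), b <- [:: true; false]].

Lemma uniq_gen_letters : uniq gen_letters.
Proof. by apply: allpairs_uniq => [||[? ?] [? ?] _ _ []->->]; rewrite ?iota_uniq. Qed.

Lemma gen_word_letters u : gen_word gens u -> {subset u <= gen_letters}.
Proof.
move=> gu [i b] /(allP gu) /= i_lt.
by apply: allpairs_f; [rewrite mem_iota | case: b].
Qed.

Lemma abelian_poly_growth : poly_growth m gens.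
Proof.
exists 1, (size gen_letters) => r.
pose nf cs := geval gens (flatten [seq nseq c.2 c.1 | c <- zip gen_letters cs]).
exists [seq nf cs | cs <- bounded_seqs r (size gen_letters)].
split; first by rewrite size_map size_bounded_seqs mul1n.
move=> u gu size_u; exists (nf [seq count_mem y u | y <- gen_letters]).
  apply: map_f; rewrite -(size_map (fun y => count_mem y u)); apply: mem_bounded_seqs.
  by apply/allP => _ /mapP[y _ ->]; apply: leq_trans (count_size _ _) size_u.
rewrite /nf -[gen_letters in zip gen_letters _]map_id zip_map.
apply: geval_perm => //; rewrite -map_comp.
apply: perm_count_nseq uniq_gen_letters (gen_word_letters gu).
Qed.

End GeneratedSubgroup.

Theorem proposition3 (n : nat) (p : bword) :
  2 <= n -> valid n p ->
  [/\ in_centralizer n.+1 (xelt n p) (c1 n),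
      in_centralizer n.+1 (xelt n p) (c2 n p),
      in_centralizer n.+1 (xelt n p) (c3 n),
      subgroup_abelian n.+1 [:: c1 n; c2 n p; c3 n]
    & poly_growth n.+1 [:: c1 n; c2 n p; c3 n]].
Proof.
move=> n_ge2 vp; have x_c2 := xelt_c2 p (ltnW n_ge2).
have c1_c2 := c1_central (valid_c2 vp); have c1_c3 := c1_central (valid_c3 n).
have c3_c2 := c3_c2 vp.
have abelian : subgroup_abelian n.+1 [:: c1 n; c2 n p; c3 n].
  apply: subgroup_abelian_gens; first by rewrite /= valid_c1 valid_c2 // valid_c3.
  by move=> g h; rewrite !inE; do 2 case/or3P => /eqP->; first [done | exact: bcommute_sym].
split=> //; last exact: abelian_poly_growth.
- by split; [apply: valid_c1 | apply: bcommute_beqr x_c2 c1_c2].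
- by split; [apply: valid_c2 | apply: bcommute_beqr x_c2 (bcommute_refl _ _)].
- by split; [apply: valid_c3 | apply: bcommute_beqr x_c2 c3_c2].
Qed.
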